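(* Let $f\in\mathbb{K}_C[[\underline{x}]][y]$ be a free polynomial of degree $n$ with characteristic exponents $m_1<\dots<m_h$, and let $e_i$, $r_i$ be its $e$- and $r$-sequences. Then for all $i\in\{1,\dots,h\}$, $e_ir_i\in(n\mathbb{Z})^e+\sum_{j=1}^{i-1}r_j\mathbb{Z}$, and $\alpha r_i\notin(n\mathbb{Z})^e+\sum_{j=1}^{i-1}r_j\mathbb{Z}$ for all integers $1\le\alpha<e_i$.
   Context: $\mathbb{K}$ is an algebraically closed field of characteristic $0$, $\underline{x}=(x_1,\dots,x_e)$. $C\subseteq\mathbb{R}^e$ is a line free cone (nonnegative real combinations of finitely many vectors of $\mathbb{Q}^e$, with $v\in C\setminus\{0\}\Rightarrow -v\notin C$). $\mathbb{K}_C[[\underline{x}]]$ is the ring of formal series with exponents in $C\cap\mathbb{Z}^e$; $\mathbb{K}_C[[\underline{x}^{1/N}]]$ the ring of series $\sum a_p\underline{x}^{p/N}$, $p\in\mathbb{Z}^e$, $p/N\in C$. Fix a total additive order $\le$ on $\mathbb{Z}^e$ compatible with $C$, extended to $\mathbb{Q}^e$ by clearing denominators; $O(z)$ is the $\le$-least exponent of a nonzero series $z$. A monic $g\in\mathbb{K}_C[[\underline{x}]][y]$ of degree $N$ is free if irreducible in $\mathbb{K}_C[[\underline{x}]][y]$ with a root in $\mathbb{K}_C[[\underline{x}^{1/N}]]$. For free $f$ of degree $n$ with roots $y_1,\dots,y_n$ (all in $\mathbb{K}_C[[\underline{x}^{1/n}]]$), the characteristic exponents are the $m\in\mathbb{Z}^e$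 with $m/n=O(y_i-y_j)$ for some $y_i\ne y_j$, listed $m_1<\dots<m_h$. Sequences: $D_1=n^e$, $D_{i+1}=$ gcd of the $e\times e$ minors of $(nI_e,m_1^T,\dots,m_i^T)$ ($1\le i\le h$); $e_i=D_i/D_{i+1}$; $r_1=m_1$ and $r_i=e_{i-1}r_{i-1}+m_i-m_{i-1}$ for $2\le i\le h$. *)

From HB Require Import structures.
From mathcomp Require Import all_boot all_order all_algebra.
From mathcomp Require Import boolp classical_sets fsbigop.
Set Implicit Arguments. Unset Strict Implicit. Unset Printing Implicit Defensive.
Import Order.TTheory GRing.Theory Num.Theory.
Local Open Scope ring_scope.

Notation expo e := 'rV[int]_e.

Definition inConeQ (e : nat) (gens : seq 'rV[rat]_e) (v : 'rV[rat]_e) : Prop :=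
  exists lam : 'I_(size gens) -> rat,
    (forall k, 0 <= lam k) /\ v = \sum_(k < size gens) lam k *: gens`_k.

Definition inCone (e : nat) (gens : seq 'rV[rat]_e) (p : expo e) : Prop :=
  inConeQ gens (map_mx (fun x : int => x%:~R) p).

Definition line_free (e : nat) (gens : seq 'rV[rat]_e) : Prop :=
  forall v, inConeQ gens v -> v != 0 -> ~ inConeQ gens (- v).

(** An element of
    K_C[[x]] is a series supported in C ∩ Z^e (coefficient of x^p); an element
    of K_C[[x^{1/N}]] is a series supported in C ∩ Z^e read as the coefficient
    of x^{p/N} (p/N ∈ C iff p ∈ C since C is a cone). *)
Definition series (e : nat) (K : Type) := expo e -> K.

Section Series.
Variables (e : nat) (K : fieldType) (gens : seq 'rV[rat]_e).

Definition supported (a : series e K) : Prop :=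
  forall p, a p != 0 -> inCone gens p.

Definition szero : series e K := fun _ => 0.
Definition sone : series e K := fun p => if p == 0 then 1 else 0.
Definition ssub (a b : series e K) : series e K := fun p => a p - b p.

(* Cauchy product; the sum is finitely supported for series supported in a
   line-free cone. *)
Definition smul (a b : series e K) : series e K :=
  fun p => (\sum_(q \in [set: expo e]) a q * b (p - q))%R.

Definition spow (z : series e K) (k : nat) : series e K := iter k (smul z) sone.

(* The embedding K_C[[x]] -> K_C[[x^{1/N}]]: x^p |-> x^{(N p)/N}. *)
Definition sembed (N : nat) (a : series e K) : series e K :=
  fun p => if [forall j, (N%:Z %| p ord0 j)%Z]
           then a (\row_j ((p ord0 j) %/ N%:Z)%Z) else 0.

(** Polynomials in y with series coefficients: list of coefficients
    (constant term first). *)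
Definition pcoef (f : seq (series e K)) (k : nat) : series e K := nth szero f k.

Definition poly_supported (f : seq (series e K)) : Prop :=
  forall k, supported (pcoef f k).

Definition pmul_eq (f g h : seq (series e K)) : Prop :=
  forall k p, pcoef f k p = (\sum_(i < k.+1) smul (pcoef g i) (pcoef h (k - i)) p)%R.

Definition pzero (f : seq (series e K)) : Prop := forall k p, pcoef f k p = 0.

Definition punit (g : seq (series e K)) : Prop :=
  poly_supported g /\
  exists g', poly_supported g' /\ pmul_eq [:: sone] g g'.

Definition pirreducible (f : seq (series e K)) : Prop :=
  poly_supported f /\ ~ pzero f /\ ~ punit f /\
  forall g h, poly_supported g -> poly_supported h -> pmul_eq f g h ->
    punit g \/ punit h.

Definition pmonic (N : nat) (f : seq (series e K)) : Prop :=
  size f = N.+1 /\ forall p, pcoef f N p = sone p.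

Definition proot (N : nat) (f : seq (series e K)) (z : series e K) : Prop :=
  supported z /\
  forall p, (\sum_(k < size f) smul (sembed N (pcoef f k)) (spow z k) p)%R = 0.

Definition free_poly (N : nat) (f : seq (series e K)) : Prop :=
  poly_supported f /\ pmonic N f /\ pirreducible f /\ exists z, proot N f z.

(** m is a characteristic exponent of f (degree n): m/n = O(y_i - y_j) for two
    distinct roots y_i, y_j in K_C[[x^{1/n}]], w.r.t. the order [le]. *)
Definition char_exp (le : rel (expo e)) (n : nat) (f : seq (series e K))
    (m : expo e) : Prop :=
  exists y1 y2, proot n f y1 /\ proot n f y2 /\ y1 <> y2 /\
    ssub y1 y2 m != 0 /\ forall q, ssub y1 y2 q != 0 -> le m q.
End Series.

Definition compatible_order (e : nat) (gens : seq 'rV[rat]_e)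
    (le : rel (expo e)) : Prop :=
  [/\ reflexive le, antisymmetric le, transitive le & total le] /\
  (forall a b c, le a b -> le (a + c) (b + c)) /\
  (forall p, inCone gens p -> le 0 p).

(** The sequences attached to n and the characteristic exponents
    ms = [m_1; ...; m_h] (0-indexed: ms`_i = m_{i+1}). *)
Section Sequences.
Variables (e n : nat) (ms : seq (expo e)).

Definition charmx (i : nat) : 'M[int]_(e, e + i) :=
  row_mx (n%:Z)%:M (\matrix_(r < e, c < i) (ms`_c) ord0 r).

(* Dseq i = D_{i+1} = gcd of the e x e minors of charmx i (so Dseq 0 = n^e) *)
Definition Dseq (i : nat) : nat :=
  \big[gcdn/0%N]_(s : {ffun 'I_e -> 'I_(e + i)}) absz (\det (colsub s (charmx i))).

(* eseq i = e_{i+1} = D_{i+1} / D_{i+2} *)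
Definition eseq (i : nat) : nat := (Dseq i %/ Dseq i.+1)%N.

(* rseq i = r_{i+1} *)
Fixpoint rseq (i : nat) : expo e :=
  match i with
  | 0 => ms`_0
  | i'.+1 => rseq i' *+ eseq i' + ms`_i - ms`_i'
  end.

Definition in_lattice (k : nat) (v : expo e) : Prop :=
  exists (u : expo e) (c : 'I_k -> int),
    v = u *+ n + \sum_(j < k) rseq j *~ c j.
End Sequences.

From HB Require Import structures.
From mathcomp Require Import all_boot all_order all_algebra perm.
Import Order.TTheory GRing.Theory Num.Theory.
Set Implicit Arguments. Unset Strict Implicit. Unset Printing Implicit Defensive.
Local Open Scope ring_scope.

(* Let L_k be the lattice (nZ)^e + m_1 Z + ... + m_k Z spanned by the columns of
   the matrix (n I_e, m_1^T, ..., m_k^T), whose maximal minors have gcd D_{k+1}.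
   By induction r_k = m_k mod L_(k-1), so L_k is also (nZ)^e + r_1 Z + ... + r_k Z
   and both claims are statements about the order of m_i modulo L_(i-1).  For an
   integer matrix A with minors gcd D(A) and a column m, that order is governed by
   D(A) / D(A | m): if a m lies in the column lattice of A then scaling the m-column
   of each minor of (A | m) by a shows D(A) | a D(A | m); conversely
   (D(A) / D(A | m)) m lies in that lattice, as one sees in the coordinates of a
   Smith normal form of A. *)

Lemma det_mulmx_sum_colsub (e N : nat) (A : 'M[int]_(e, N)) (X : 'M[int]_(N, e)) :
  \det (A *m X) = \sum_(s : {ffun 'I_e -> 'I_N}) (\prod_i X (s i) i) * \det (colsub s A).
Proof.
transitivity (\sum_(p : 'S_e) \sum_(s : {ffun 'I_e -> 'I_N})
   (-1) ^+ p * \prod_i (A (p i) (s i) * X (s i) i)).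
  rewrite -det_tr /determinant; apply: eq_bigr => p _.
  rewrite (eq_bigr (fun i => \sum_k A (p i) k * X k i)); last by move=> i _; rewrite !mxE.
  by rewrite bigA_distr_bigA big_distrr.
rewrite exchange_big /=; apply: eq_bigr => s _.
rewrite -(det_tr (colsub s A)) /determinant big_distrr /=; apply: eq_bigr => p _.
have -> : \prod_i (colsub s A)^T i (p i) = \prod_i A (p i) (s i).
  by apply: eq_bigr => i _; rewrite !mxE.
by rewrite big_split /= mulrA mulrC.
Qed.

Section MinorsGcd.
Variable e : nat.

Definition minors_gcd N (A : 'M[int]_(e, N)) : nat :=
  \big[gcdn/0%N]_(s : {ffun 'I_e -> 'I_N}) absz (\det (colsub s A)).

Definition colspanZ N (A : 'M[int]_(e, N)) (v : 'cV[int]_e) : Prop :=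
  exists x : 'cV_N, v = A *m x.

Lemma minors_gcd_dvd_minor N (A : 'M[int]_(e, N)) (s : {ffun 'I_e -> 'I_N}) :
  (minors_gcd A %| absz (\det (colsub s A)))%N.
Proof. exact: (biggcdn_inf s). Qed.

Lemma dvdn_minors_gcd N (A : 'M[int]_(e, N)) d :
  (forall s : {ffun 'I_e -> 'I_N}, d %| absz (\det (colsub s A)))%N ->
  (d %| minors_gcd A)%N.
Proof. by move=> dvd_d; apply/dvdn_biggcdP => s _; apply: dvd_d. Qed.

Lemma minors_gcd_dvd_det_mulmx N (A : 'M[int]_(e, N)) (X : 'M[int]_(N, e)) :
  (minors_gcd A %| absz (\det (A *m X)))%N.
Proof.
rewrite -(absz_nat (minors_gcd A)) -dvdzE det_mulmx_sum_colsub.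
apply: rpred_sum => s _; apply: dvdz_mull.
by rewrite dvdzE absz_nat minors_gcd_dvd_minor.
Qed.

Lemma minors_gcd_mulmxr N N' (A : 'M[int]_(e, N)) (X : 'M[int]_(N, N')) :
  (minors_gcd A %| minors_gcd (A *m X))%N.
Proof.
by apply: dvdn_minors_gcd => s; rewrite -mulmx_colsub minors_gcd_dvd_det_mulmx.
Qed.

Lemma minors_gcd_mulmxl N (L : 'M[int]_e) (A : 'M[int]_(e, N)) :
  (minors_gcd A %| minors_gcd (L *m A))%N.
Proof.
apply: dvdn_minors_gcd => s; rewrite -mulmx_colsub det_mulmx abszM.
exact/dvdn_mull/minors_gcd_dvd_minor.
Qed.

Lemma minors_gcd_colsub N N' (A : 'M[int]_(e, N)) (g : 'I_N' -> 'I_N) :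
  (minors_gcd A %| minors_gcd (colsub g A))%N.
Proof.
apply: dvdn_minors_gcd => s; rewrite -colsub_comp.
have -> : colsub (g \o s) A = colsub [ffun i => g (s i)] A.
  by apply/matrixP => i j; rewrite !mxE ffunE.
exact: minors_gcd_dvd_minor.
Qed.

Lemma minors_gcd_row_mx_dvd N (A : 'M[int]_(e, N)) (m : 'cV_e) :
  (minors_gcd (row_mx A m) %| minors_gcd A)%N.
Proof.
by have := minors_gcd_colsub (row_mx A m) (lshift 1); rewrite -lsubmxEsub row_mxKl.
Qed.

Section ColSpan.
Variables (N : nat) (A : 'M[int]_(e, N)).

Lemma colspanZ0 : colspanZ A 0.
Proof. by exists 0; rewrite mulmx0. Qed.

Lemma colspanZD u v : colspanZ A u -> colspanZ A v -> colspanZ A (u + v).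
Proof. by move=> [x ->] [y ->]; exists (x + y); rewrite mulmxDr. Qed.

Lemma colspanZ_scale a u : colspanZ A u -> colspanZ A (a *: u).
Proof. by move=> [x ->]; exists (a *: x); rewrite scalemxAr. Qed.

Lemma colspanZ_mulz u z : colspanZ A u -> colspanZ A (u *~ z).
Proof. by rewrite -scaler_int; apply: colspanZ_scale. Qed.

Lemma colspanZ_sum (I : finType) (F : I -> 'cV_e) :
  (forall i, colspanZ A (F i)) -> colspanZ A (\sum_i F i).
Proof. by move=> AF; apply: big_ind => //; [apply: colspanZ0 | apply: colspanZD]. Qed.

Lemma colspanZ_row_mxl (m : 'cV_e) u : colspanZ A u -> colspanZ (row_mx A m) u.
Proof. by move=> [x ->]; exists (col_mx x 0); rewrite mul_row_col mulmx0 addr0. Qed.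

Lemma colspanZ_row_mxr (m : 'cV_e) : colspanZ (row_mx A m) m.
Proof. by exists (col_mx 0 1); rewrite mul_row_col mulmx0 add0r mulmx1. Qed.

Lemma colspanZ_mulmxr N' (X : 'M[int]_(N, N')) u : colspanZ (A *m X) u -> colspanZ A u.
Proof. by move=> [x ->]; exists (X *m x); rewrite mulmxA. Qed.

Lemma colspanZ_colsub N' (g : 'I_N' -> 'I_N) u : colspanZ (colsub g A) u -> colspanZ A u.
Proof. by rewrite -[A]mulmx1 -mulmx_colsub mulmx1; apply: colspanZ_mulmxr. Qed.

Lemma minors_gcd_dvd_det (M : 'M[int]_e) :
  (forall c, colspanZ A (col c M)) -> (minors_gcd A %| absz (\det M))%N.
Proof.
move=> /fin_all_exists[x Mx].
have -> : M = A *m \matrix_(k, c) x c k 0.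
  apply/matrixP => i c; have /matrixP/(_ i 0) := Mx c.
  by rewrite !mxE => ->; apply: eq_bigr => k _; rewrite !mxE.
exact: minors_gcd_dvd_det_mulmx.
Qed.

End ColSpan.

Lemma colspanZ_col_row_mx N (A : 'M[int]_(e, N)) (u : 'cV_e) c :
  colspanZ A u -> colspanZ A (col c (row_mx A u)).
Proof.
move=> [x ->]; rewrite -[A in row_mx A _]mulmx1 -mul_mx_row colE -mulmxA.
by exists (row_mx 1%:M x *m delta_mx c 0).
Qed.

Lemma colsub_row_mx_muln N (A : 'M[int]_(e, N)) (m : 'cV_e) k (s : 'I_e -> 'I_(N + 1)) :
  colsub s (row_mx A (m *+ k)) =
  colsub s (row_mx A m) *m diag_mx (\row_c (if s c == rshift N ord0 then k%:Z else 1)).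
Proof.
apply/matrixP => i c; rewrite mul_mx_diag !mxE.
case: splitP => [c' sc | c' sc]; rewrite ?mulmxnE.
  suff /negPf-> : s c != rshift N ord0 by rewrite mulr1.
  apply/eqP => /(congr1 val); rewrite /= sc addn0 => c'N.
  by move: (ltn_ord c'); rewrite c'N ltnn.
have -> : s c = rshift N ord0 by apply: val_inj; rewrite /= sc (ord1 c').
by rewrite eqxx (ord1 c') -mulr_natr natz.
Qed.

Lemma minors_gcd_dvd_muln_row_mx N (A : 'M[int]_(e, N)) (m : 'cV_e) k :
  colspanZ A (m *+ k) -> (minors_gcd A %| k * minors_gcd (row_mx A m))%N.
Proof.
move=> Akm; rewrite /minors_gcd (big_morph (muln k) (muln_gcdr k) (muln0 k)).
apply/dvdn_biggcdP => s _; rewrite -/(minors_gcd A).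
have : (minors_gcd A %| absz (\det (colsub s (row_mx A (m *+ k)))))%N.
  by apply: minors_gcd_dvd_det => c; rewrite col_colsub; apply: colspanZ_col_row_mx.
rewrite colsub_row_mx_muln det_mulmx det_diag abszM.
case: (pickP (fun j => s j == rshift N ord0)) => [j sj | no_last]; last first.
  rewrite big1 ?muln1 => [/dvdn_mull->//|c _].
  by rewrite mxE no_last.
case: (pickP (fun l => (l != j) && (s l == rshift N ord0))) => [l /andP[lj sl] | one_last].
  suff -> : \det (colsub s (row_mx A m)) = 0 by rewrite muln0 dvdn0.
  rewrite -det_tr; apply: (determinant_alternate lj) => r.
  by rewrite !mxE (eqP sl) (eqP sj).
rewrite (bigD1 j) //= big1 => [|c cj]; last first.
  by rewrite mxE; have := one_last c; rewrite cj /= => ->.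
by rewrite mxE sj mulr1 mulnC.
Qed.

Section SmithForm.
Variables (N : nat) (d : seq int).

Definition smith_mx : 'M[int]_(e, N) := \matrix_(i, j) (d`_i *+ (i == j :> nat)).

Definition smith_diag (i : 'I_e) : int := d`_i *+ (i < N)%N.

Lemma smith_diag_dvd_minors_gcd : (\prod_i smith_diag i %| (minors_gcd smith_mx)%:Z)%Z.
Proof.
pose E := \matrix_(i < e, j < N) ((i == j :> nat)%:R : int).
have -> : smith_mx = diag_mx (\row_i smith_diag i) *m E.
  apply/matrixP => i j; rewrite mul_diag_mx !mxE /smith_diag.
  by have [/eqP ij|] := boolP (i == j :> nat); rewrite ?ij ?ltn_ord ?mulr1 // mulr0n mulr0.
rewrite dvdzE absz_nat; apply: dvdn_minors_gcd => t.
rewrite -mulmx_colsub det_mulmx abszM det_diag; apply: dvdn_mulr.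
suff -> : \prod_i (\row_i smith_diag i) 0 i = \prod_i smith_diag i by [].
by apply: eq_bigr => i _; rewrite mxE.
Qed.

Lemma colspanZ_smith_mx c : colspanZ smith_mx (smith_diag c *: delta_mx c 0).
Proof.
rewrite /smith_diag; case: (ltnP c N) => [cN | Nc]; last first.
  by rewrite mulr0n scale0r; apply: colspanZ0.
exists (delta_mx (Ordinal cN) 0); rewrite -colE; apply/matrixP => i z.
rewrite !mxE (ord1 z) andbT /= val_eqE.
by case: (eqVneq i c) => [->|_]; rewrite ?mulr1 ?mulr0.
Qed.

Lemma colspanZ_smith_mx_dvd (v : 'cV_e) :
  (forall j, (smith_diag j %| v j ord0)%Z) -> colspanZ smith_mx v.
Proof.
move=> s_dvd; rewrite (matrix_sum_delta v); apply: colspanZ_sum => j.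
apply: colspanZ_sum => z; rewrite (ord1 z); have [k ->] := dvdzP (s_dvd j).
by rewrite -scalerA; apply/colspanZ_scale/colspanZ_smith_mx.
Qed.

End SmithForm.

Lemma minors_gcd_dvd_replace_col N (B : 'M[int]_(e, N)) (s : 'I_e -> int) (w : 'cV_e) j :
  (forall c, colspanZ B (s c *: delta_mx c 0)) -> colspanZ B w ->
  ((minors_gcd B)%:Z %| w j ord0 * \prod_(a < e.-1) s (lift j a))%Z.
Proof.
move=> Bs Bw; pose M := \matrix_(r, c) (if c == j then w r ord0 else s c *+ (r == c)).
have detM : \det M = w j ord0 * \prod_(a < e.-1) s (lift j a).
  rewrite (expand_det_row _ j) (bigD1 j) //= big1 ?addr0 => [|c cj]; last first.
    by rewrite !mxE (negPf cj) eq_sym (negPf cj) mulr0n mul0r.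
  rewrite !mxE eqxx /cofactor.
  have -> : row' j (col' j M) = diag_mx (\row_a s (lift j a)).
    apply/matrixP => a b; rewrite !mxE eq_sym (negPf (neq_lift j b)).
    by rewrite (inj_eq (@lift_inj _ j)); have [->|] := eqVneq a b.
  rewrite det_diag -signr_odd addnn odd_double expr0 mul1r.
  by congr (_ * _); apply: eq_bigr => i _; rewrite mxE.
rewrite -detM dvdzE absz_nat; apply: minors_gcd_dvd_det => c.
have [->|cj] := eqVneq c j.
  by have -> : col j M = w by apply/matrixP => r z; rewrite !mxE eqxx (ord1 z).
have -> : col c M = s c *: delta_mx c 0.
  by apply/matrixP => r z; rewrite !mxE (negPf cj) (ord1 z) eqxx andbT mulr_natr.
exact: Bs.
Qed.

Lemma dvdz_mul_cancel (s Q q w p : int) :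
  p != 0 -> (s * Q %| q * p)%Z -> (p %| w * Q)%Z -> (s %| q * w)%Z.
Proof.
move=> p_neq0 sQ_qp p_wQ; rewrite -(dvdz_mul2r p_neq0).
apply: (@dvdz_trans (s * (w * Q))); first exact: dvdz_mul (dvdzz s) p_wQ.
by rewrite mulrCA [q * w]mulrC -mulrA; apply: dvdz_mul (dvdzz w) sQ_qp.
Qed.

Lemma colspanZ_row_mx_index N (A : 'M[int]_(e, N)) (m : 'cV_e) :
  colspanZ A (m *+ (minors_gcd A %/ minors_gcd (row_mx A m))).
Proof.
have [->|DA_neq0] := eqVneq (minors_gcd A) 0%N.
  by rewrite div0n mulr0n; apply: colspanZ0.
have [L L_unit [R R_unit [d _]]] := int_Smith_normal_form A.
rewrite -/(smith_mx N d); set S := smith_mx N d => defA.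
set s := smith_diag N d; set dm := minors_gcd (row_mx A m).
have dm_dvd : (dm %| minors_gcd A)%N := minors_gcd_row_mx_dvd A m.
have dm_neq0 : dm != 0%N.
  by apply: contra_neq DA_neq0 => dm0; move: dm_dvd; rewrite dm0 dvd0n => /eqP.
set q := (minors_gcd A %/ dm)%N.
have prod_dvd : (\prod_i s i %| q%:Z * dm%:Z)%Z.
  rewrite -PoszM divnK //; apply: dvdz_trans (smith_diag_dvd_minors_gcd N d) _.
  rewrite dvdzE !absz_nat defA.
  exact: dvdn_trans (minors_gcd_mulmxl L S) (minors_gcd_mulmxr _ R).
pose w := invmx L *m m.
pose B := invmx L *m row_mx A m.
have defB : B = row_mx (S *m R) w by rewrite /B mul_mx_row defA -mulmxA (mulKmx L_unit).
have SB v : colspanZ S v -> colspanZ B v.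
  move=> Sv; rewrite defB; apply: colspanZ_row_mxl.
  by apply: (@colspanZ_mulmxr _ _ _ (invmx R)); rewrite -mulmxA mulmxV // mulmx1.
(* Cramer on diag(s) with its j-th column replaced by w gives dm | w_j prod_(c != j) s_c,
   and prod s | q dm then forces s_j | q w_j. *)
have s_dvd j : (s j %| (w *+ q) j ord0)%Z.
  rewrite mulmxnE -mulr_natl natz.
  apply: (@dvdz_mul_cancel _ (\prod_(a < e.-1) s (lift j a)) _ _ dm%:Z).
  - by rewrite eqz_nat.
  - by move: prod_dvd; rewrite (bigD1_ord j).
  apply: (@dvdz_trans (minors_gcd B)%:Z).
    by rewrite dvdzE !absz_nat; apply: minors_gcd_mulmxl.
  apply: minors_gcd_dvd_replace_col => [c|]; first exact/SB/colspanZ_smith_mx.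
  by rewrite defB; apply: colspanZ_row_mxr.
have [x wqE] := colspanZ_smith_mx_dvd s_dvd.
have -> : m *+ q = L *m (w *+ q) by rewrite (raddfMn (mulmx L)) /= /w mulKVmx.
by exists (invmx R *m x); rewrite wqE defA -!mulmxA (mulKVmx R_unit).
Qed.

End MinorsGcd.

Section CharacteristicLattice.
Variables (e n : nat) (ms : seq (expo e)).

Definition char_lattice k (v : expo e) : Prop := colspanZ (charmx n ms k) v^T.

Lemma char_latticeD k u v : char_lattice k u -> char_lattice k v -> char_lattice k (u + v).
Proof. by rewrite /char_lattice raddfD; apply: colspanZD. Qed.

Lemma char_lattice_mulz k u z : char_lattice k u -> char_lattice k (u *~ z).
Proof. by rewrite /char_lattice raddfMz; apply: colspanZ_mulz. Qed.

Lemma char_lattice_muln k u a : char_lattice k u -> char_lattice k (u *+ a).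
Proof. by rewrite pmulrn; apply: char_lattice_mulz. Qed.

Lemma char_latticeB k u v : char_lattice k u -> char_lattice k v -> char_lattice k (u - v).
Proof. by move=> Ku Kv; rewrite -mulrN1z; apply/char_latticeD/char_lattice_mulz. Qed.

Let addnS1 k : (e + k.+1 = e + k + 1)%N. Proof. by rewrite addnS addn1. Qed.

Lemma charmxE k (r : 'I_e) (c : 'I_(e + k)) :
  charmx n ms k r c = if (c < e)%N then n%:Z *+ (r == c :> nat) else (ms`_(c - e)) ord0 r.
Proof. by rewrite /charmx mxE; case: splitP => c' ->; rewrite !mxE ?addKn. Qed.

Lemma charmxS k :
  charmx n ms k.+1 = colsub (cast_ord (addnS1 k)) (row_mx (charmx n ms k) (ms`_k)^T).
Proof.
apply/matrixP => r c; rewrite charmxE 2!mxE.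
case: (splitP (cast_ord (addnS1 k) c)) => [c' /= cE | c' /= cE].
  by rewrite charmxE -cE.
have -> : (c : nat) = e + k by rewrite cE (ord1 c') addn0.
by rewrite mxE ltnNge leq_addr addKn (ord1 c').
Qed.

Lemma row_mx_charmx k :
  row_mx (charmx n ms k) (ms`_k)^T = colsub (cast_ord (esym (addnS1 k))) (charmx n ms k.+1).
Proof.
by rewrite charmxS -colsub_comp; apply/matrixP => r c; rewrite !mxE /= cast_ordKV.
Qed.

Lemma char_lattice_row_mx k u :
  colspanZ (row_mx (charmx n ms k) (ms`_k)^T) u^T -> char_lattice k.+1 u.
Proof. by rewrite row_mx_charmx; apply: colspanZ_colsub. Qed.

Lemma char_lattice_widen k u : char_lattice k u -> char_lattice k.+1 u.
Proof. by move=> Ku; apply/char_lattice_row_mx/colspanZ_row_mxl. Qed.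

Lemma char_lattice_ms k : char_lattice k.+1 ms`_k.
Proof. exact/char_lattice_row_mx/colspanZ_row_mxr. Qed.

Lemma DseqS k : Dseq n ms k.+1 = minors_gcd (row_mx (charmx n ms k) (ms`_k)^T).
Proof.
apply/eqP; rewrite eqn_dvd {1}row_mx_charmx minors_gcd_colsub /=.
by rewrite [Dseq _ _ _]/(minors_gcd _) charmxS minors_gcd_colsub.
Qed.

Lemma char_lattice_eseq k : char_lattice k (ms`_k *+ eseq n ms k).
Proof. by rewrite /char_lattice raddfMn /eseq DseqS; apply: colspanZ_row_mx_index. Qed.

Lemma Dseq_dvd_muln k a :
  char_lattice k (ms`_k *+ a) -> (Dseq n ms k %| a * Dseq n ms k.+1)%N.
Proof. by rewrite /char_lattice raddfMn DseqS; apply: minors_gcd_dvd_muln_row_mx. Qed.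

Lemma DseqS_dvd k : (Dseq n ms k.+1 %| Dseq n ms k)%N.
Proof. by rewrite DseqS; apply: minors_gcd_row_mx_dvd. Qed.

Definition span_nZ (g : nat -> expo e) k (v : expo e) : Prop :=
  exists (u : expo e) (c : 'I_k -> int), v = u *+ n + \sum_(j < k) g j *~ c j.

Lemma span_nZ0 g g' v : span_nZ g 0 v -> span_nZ g' 0 v.
Proof. by move=> [u [c ->]]; exists u, c; rewrite !big_ord0. Qed.

Lemma span_nZS g k v : span_nZ g k.+1 v <-> exists t, span_nZ g k (v - g k *~ t).
Proof.
split=> [[u [c ->]] | [t [u [c vE]]]].
  exists (c ord_max), u, (fun j => c (widen_ord (leqnSn k) j)).
  by rewrite big_ord_recr /= addrA addrK.
exists u, (fun j => if unlift ord_max j is Some j' then c j' else t).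
rewrite big_ord_recr /= unlift_none addrA.
have widen_lift j : widen_ord (leqnSn k) j = lift ord_max j.
  by apply: val_inj; rewrite /= /bump leqNgt ltn_ord.
under eq_bigr => j _ do rewrite widen_lift liftK.
by rewrite -vE subrK.
Qed.

Lemma trmx_span_nZ k (u : expo e) (c : 'I_k -> int) :
  (u *+ n + \sum_(j < k) ms`_j *~ c j)^T = charmx n ms k *m col_mx u^T (\col_j c j).
Proof.
rewrite raddfD raddfMn raddf_sum /charmx mul_row_col mul_scalar_mx.
apply/matrixP => r z; rewrite (ord1 z) !mxE mulmxnE !mxE summxE -mulr_natl natz.
by congr (_ + _); apply: eq_bigr => j _; rewrite raddfMz -scaler_int !mxE intz mulrC.
Qed.

Lemma span_nZ_char k v : span_nZ (nth 0 ms) k v <-> char_lattice k v.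
Proof.
split=> [[u [c ->]] | [x vE]].
  by rewrite /char_lattice trmx_span_nZ; eexists.
exists (usubmx x)^T, (fun j => dsubmx x j ord0).
apply: trmx_inj; rewrite trmx_span_nZ trmxK vE -[x in LHS]vsubmxK.
by congr (_ *m col_mx _ _); apply/matrixP => a b; rewrite !mxE (ord1 b).
Qed.

Lemma char_lattice_congr k u u' :
  char_lattice k (u - u') -> char_lattice k u <-> char_lattice k u'.
Proof.
move=> Kd; split=> Ku; first by rewrite -(subKr u u'); apply: char_latticeB.
by rewrite -(subrK u' u); apply: char_latticeD.
Qed.

Lemma rseq_sub_char k : char_lattice k (rseq n ms k - ms`_k).
Proof.
elim: k => [|k IHk] /=; first by rewrite subrr /char_lattice raddf0; apply: colspanZ0.
have -> : rseq n ms k *+ eseq n ms k + ms`_k.+1 - ms`_k - ms`_k.+1 =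
    (rseq n ms k - ms`_k) *+ eseq n ms k + (ms`_k *+ eseq n ms k - ms`_k).
  by rewrite mulrnBl -!addrA; congr (_ + _); rewrite addrCA subrr addr0 addKr.
apply: char_latticeD; first exact/char_lattice_muln/char_lattice_widen.
by apply: char_latticeB; [apply/char_lattice_widen/char_lattice_eseq | apply: char_lattice_ms].
Qed.

Lemma in_lattice_char k v : in_lattice n ms k v <-> char_lattice k v.
Proof.
elim: k v => [|k IHk] v.
  change (span_nZ (rseq n ms) 0 v <-> char_lattice 0 v).
  by rewrite -span_nZ_char; split; apply: span_nZ0.
change (span_nZ (rseq n ms) k.+1 v <-> char_lattice k.+1 v).
have step t : span_nZ (rseq n ms) k (v - rseq n ms k *~ t) <->
              span_nZ (nth 0 ms) k (v - ms`_k *~ t).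
  apply: iff_trans (IHk _) _; rewrite span_nZ_char; apply: iff_sym.
  apply: char_lattice_congr; rewrite opprB addrC addrA subrK -mulrzBl.
  exact/char_lattice_mulz/rseq_sub_char.
by rewrite -span_nZ_char !span_nZS; split=> -[t /step Kt]; exists t.
Qed.

End CharacteristicLattice.

Lemma ndvdn_mul_lt_divn (D D' a : nat) :
  (D' %| D)%N -> (0 < a)%N -> (a < D %/ D')%N -> ~~ (D %| a * D')%N.
Proof.
move=> D'_dvd a_gt0 a_lt; have D'_gt0 : (0 < D')%N by case: D' a_lt D'_dvd; rewrite ?divn0.
rewrite -{1}(divnK D'_dvd) dvdn_pmul2r //; apply/negP => /(dvdn_leq a_gt0).
by rewrite leqNgt a_lt.
Qed.

Unset Implicit Arguments.

Theorem mainTheorem4 (K : closedFieldType) (charK : [pchar K] =i pred0)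
  (e : nat) (gens : seq 'rV[rat]_e) (hC : line_free gens)
  (le : rel (expo e)) (hle : compatible_order gens le)
  (n : nat) (f : seq (series e K)) (hf : free_poly gens n f)
  (ms : seq (expo e))
  (hms_sorted : sorted (fun a b => le a b && (a != b)) ms)
  (hms : forall m, m \in ms <-> char_exp gens le n f m) :
  forall i, (i < size ms)%N ->
    in_lattice n ms i (rseq n ms i *+ eseq n ms i) /\
    (forall alpha : nat, (1 <= alpha)%N -> (alpha < eseq n ms i)%N ->
       ~ in_lattice n ms i (rseq n ms i *+ alpha)).
Proof.
move=> i _; have Kr := rseq_sub_char n ms i.
split=> [|a a_gt0 a_lt /in_lattice_char Kra].
  apply/in_lattice_char; rewrite -(subrK ms`_i (rseq n ms i)) mulrnDl.
  exact: char_latticeD (char_lattice_muln _ Kr) (char_lattice_eseq _ _ _).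
have Kma : char_lattice n ms i (ms`_i *+ a).
  rewrite -(subKr (rseq n ms i) ms`_i) mulrnBl.
  exact: char_latticeB Kra (char_lattice_muln _ Kr).
by have /negP := ndvdn_mul_lt_divn (DseqS_dvd n ms i) a_gt0 a_lt; apply; apply: Dseq_dvd_muln.
Qed.
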